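(* Let $m\ge n$. Then every instance with $n$ agents having identical monotone valuations and $m$ goods has at least $n!$ EFX allocations, and there exists an instance with $n$ agents having identical additive valuations and $m$ goods that has exactly $n!$ EFX allocations. *)

From mathcomp Require Import all_boot all_order all_algebra.
From mathcomp Require Export reals.
Set Implicit Arguments. Unset Strict Implicit. Unset Printing Implicit Defensive.
Import Order.TTheory GRing.Theory Num.Theory.
Local Open Scope ring_scope.

Definition monotone_valuation (R : realFieldType) (m : nat)
  (v : {set 'I_m} -> R) : Prop :=
  v set0 = 0 /\ forall S T : {set 'I_m}, S \subset T -> v S <= v T.

Definition additive_valuation (R : realFieldType) (m : nat)
  (v : {set 'I_m} -> R) : Prop :=
  exists w : 'I_m -> R, (forall g, 0 <= w g) /\
    forall S : {set 'I_m}, v S = \sum_(g in S) w g.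

Definition allocation (m n : nat) := {ffun 'I_m -> 'I_n}.

Definition bundle (m n : nat) (A : allocation m n) (i : 'I_n) : {set 'I_m} :=
  [set g | A g == i].

Definition EFXb (R : realFieldType) (m n : nat)
  (vals : 'I_n -> {set 'I_m} -> R) (A : allocation m n) : bool :=
  [forall i, forall j, forall g, (g \in bundle A j) ==>
     (vals i (bundle A j :\ g) <= vals i (bundle A i))].

Definition num_EFX (R : realFieldType) (m n : nat)
  (vals : 'I_n -> {set 'I_m} -> R) : nat :=
  #|[set A : allocation m n | EFXb vals A]|.

From mathcomp Require Import all_boot all_order all_algebra all_fingroup.
From mathcomp Require Import zify.
Set Implicit Arguments. Unset Strict Implicit. Unset Printing Implicit Defensive.
Import Order.TTheory GRing.Theory Num.Theory.
Local Open Scope ring_scope.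

(* Lower bound: order bundles by value, ties broken by size, and give a bundle
   with r bundles below it in that order the weight 3^(2^m - r).  An allocation of minimal
   total weight satisfies a strong form of EFX: no bundle X_i is below X_j \ g
   in the order, since moving g from X_j to X_i replaces the weights of X_i and
   X_j by two weights each at most a third of that of X_i.  With m >= n such an
   allocation leaves no bundle empty, and as the valuations are identical its
   n! relabellings by permutations of the agents are distinct EFX allocations.
   Upper bound: if v counts the goods among the first n - 1, some agent gets
   none of them, so by EFX every bundle holding one of them holds nothing else;
   hence every EFX allocation gives the first n - 1 goods to distinct agents
   and all remaining goods to the last agent, and there are n! of these. *)

Section StrongEFX.

Variables (R : realFieldType) (m : nat) (v : {set 'I_m} -> R).
Hypothesis v_mono : monotone_valuation v.

Definition bundle_lt (S T : {set 'I_m}) : bool :=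
  (v S < v T) || ((v S == v T) && (#|S| < #|T|)%N).

Lemma bundle_lt_trans (S T U : {set 'I_m}) :
  bundle_lt S T -> bundle_lt T U -> bundle_lt S U.
Proof.
rewrite /bundle_lt => /orP[lt1|/andP[/eqP eq1 c1]] /orP[lt2|/andP[/eqP eq2 c2]].
- by rewrite (lt_trans lt1 lt2).
- by rewrite -eq2 lt1.
- by rewrite eq1 lt2.
- by rewrite eq1 eq2 eqxx (ltn_trans c1 c2) orbT.
Qed.

Lemma bundle_lt_irr (S : {set 'I_m}) : ~~ bundle_lt S S.
Proof. by rewrite /bundle_lt ltxx ltnn andbF. Qed.

Lemma bundle_lt_subset (S T : {set 'I_m}) : S \subset T -> ~~ bundle_lt T S.
Proof.
have [_ v_le] := v_mono => sST.
rewrite /bundle_lt negb_or negb_and -leNgt v_le //=.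
by rewrite -leqNgt subset_leq_card // orbT.
Qed.

Lemma bundle_lt_proper (S T : {set 'I_m}) : S \proper T -> bundle_lt S T.
Proof.
have [_ v_le] := v_mono => pST; have sST := proper_sub pST.
rewrite /bundle_lt; have := v_le _ _ sST; rewrite le_eqVlt => /orP[->|->] //.
by rewrite proper_card ?orbT.
Qed.

Definition bundle_rank (S : {set 'I_m}) : nat := #|[set T | bundle_lt T S]|.

Lemma bundle_rank_lt (S T : {set 'I_m}) :
  bundle_lt S T -> (bundle_rank S < bundle_rank T)%N.
Proof.
move=> ltST; apply/proper_card/properP; split.
  by apply/subsetP => U; rewrite !inE => /bundle_lt_trans; apply.
by exists S; rewrite !inE ?bundle_lt_irr.
Qed.

Definition bundle_weight (S : {set 'I_m}) : nat :=
  3 ^ (#|{set 'I_m}| - bundle_rank S).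

Lemma bundle_weight_gt0 (S : {set 'I_m}) : (0 < bundle_weight S)%N.
Proof. by rewrite expn_gt0. Qed.

Lemma bundle_weight_lt (S T : {set 'I_m}) :
  bundle_lt S T -> (bundle_weight T * 3 <= bundle_weight S)%N.
Proof.
move=> /bundle_rank_lt ltST; have leT : (bundle_rank T <= #|{set 'I_m}|)%N := max_card _.
by rewrite /bundle_weight -expnSr leq_exp2l //; lia.
Qed.

Definition potential (n : nat) (A : allocation m n) : nat :=
  \sum_(k : 'I_n) bundle_weight (bundle A k).

Definition move_good (n : nat) (A : allocation m n) (g : 'I_m) (i : 'I_n) :
  allocation m n := [ffun x => if x == g then i else A x].

Lemma bundle_move_to n (A : allocation m n) g i :
  bundle (move_good A g i) i = g |: bundle A i.
Proof.
by apply/setP => x; rewrite !inE ffunE; case: (x =P g) => [->|]; rewrite ?eqxx.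
Qed.

Lemma bundle_move_from n (A : allocation m n) g i j :
  A g = j -> i != j -> bundle (move_good A g i) j = bundle A j :\ g.
Proof.
move=> <- neq_i; apply/setP => x; rewrite !inE ffunE.
by case: (x =P g) => [->|]; rewrite ?eqxx ?(negbTE neq_i).
Qed.

Lemma bundle_move_other n (A : allocation m n) g i j k :
  A g = j -> k != i -> k != j -> bundle (move_good A g i) k = bundle A k.
Proof.
move=> <- neq_ki neq_kg; apply/setP => x; rewrite !inE ffunE.
by case: (x =P g) => [->|] //; rewrite eq_sym (negbTE neq_ki) eq_sym (negbTE neq_kg).
Qed.

Lemma potential_move_lt n (A : allocation m n) g i j :
  g \in bundle A j -> bundle_lt (bundle A i) (bundle A j :\ g) ->
  (potential (move_good A g i) < potential A)%N.
Proof.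
rewrite inE => /eqP Ag ltij.
have neq_ij : i != j.
  by apply: contraTneq ltij => ->; apply: bundle_lt_subset; apply: subD1set.
have ltiU : bundle_lt (bundle A i) (g |: bundle A i).
  apply/bundle_lt_proper/properP; split; first exact: subsetUr.
  by exists g; rewrite ?setU11 // inE Ag eq_sym.
have split_ij (B : allocation m n) : potential B =
    (bundle_weight (bundle B i) + (bundle_weight (bundle B j) +
     \sum_(k | (k != i) && (k != j)) bundle_weight (bundle B k)))%N.
  by rewrite /potential (bigD1 i) //= (bigD1 j) 1?eq_sym.
rewrite !split_ij bundle_move_to (bundle_move_from Ag neq_ij).
rewrite (eq_bigr (fun k => bundle_weight (bundle A k))); last first.
  by move=> k /andP[neq_ki neq_kj]; rewrite (bundle_move_other Ag).
have := bundle_weight_lt ltiU; have := bundle_weight_lt ltij.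
(* [lia] would not identify these atoms up to conversion, hence the names. *)
have := bundle_weight_gt0 (bundle A j); set rest := \sum_(k | _) _.
set wi := bundle_weight (bundle A i); set wj := bundle_weight (bundle A j).
set wi' := bundle_weight (g |: _); set wj' := bundle_weight (_ :\ g); lia.
Qed.

Definition strong_EFX n (A : allocation m n) : Prop :=
  forall i j g, g \in bundle A j -> ~~ bundle_lt (bundle A i) (bundle A j :\ g).

Lemma exists_strong_EFX n : (0 < n)%N -> exists A : allocation m n, strong_EFX A.
Proof.
move=> n_gt0; pose A0 : allocation m n := [ffun _ => Ordinal n_gt0].
have [A _ A_min] := @arg_minnP _ A0 xpredT (@potential n) isT.
exists A => i j g Xj_g; apply/negP => /(potential_move_lt Xj_g).
by rewrite ltnNge A_min.
Qed.

Lemma strong_EFX_EFX n (A : allocation m n) :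
  strong_EFX A -> EFXb (fun _ => v) A.
Proof.
move=> sA; apply/'forall_'forall_'forall_implyP => i j g /(sA i).
by rewrite /bundle_lt negb_or -leNgt => /andP[].
Qed.

(* If X_i were empty, every X_j \ g would be empty too (else it beats X_i on
   size), so A would be injective and miss agent i: m <= n - 1. *)
Lemma strong_EFX_onto n (A : allocation m n) :
  (n <= m)%N -> strong_EFX A -> forall i, exists g, A g = i.
Proof.
move=> le_nm sA i; have [g /eqP Ag|noi] := pickP (fun g => A g == i); first by exists g.
have bundle_i0 : bundle A i = set0 by apply/setP => x; rewrite !inE noi.
have A_inj : injective A.
  move=> x y Axy; apply/eqP/negPn/negP => neq_xy.
  have /(sA i)/negP[] : x \in bundle A (A x) by rewrite inE.
  rewrite bundle_i0; apply/bundle_lt_proper; rewrite proper0.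
  by apply/set0Pn; exists y; rewrite !inE eq_sym neq_xy -Axy eqxx.
have sub_imA : [set A x | x in [set: 'I_m]] \subset [set~ i].
  by apply/subsetP => _ /imsetP[x _ ->]; rewrite !inE noi.
have := ltn_ord i; have := subset_leq_card sub_imA.
by rewrite card_imset // cardsC1 cardsT !card_ord; lia.
Qed.

End StrongEFX.

Definition relabel (m n : nat) (s : {perm 'I_n}) (A : allocation m n) :
  allocation m n := [ffun g => s (A g)].

Lemma bundle_relabel m n (s : {perm 'I_n}) (A : allocation m n) k :
  bundle (relabel s A) k = bundle A ((s^-1)%g k).
Proof.
by apply/setP => x; rewrite !inE ffunE; apply/eqP/eqP => [<-|->]; rewrite ?permK ?permKV.
Qed.

Lemma EFX_relabel (R : realFieldType) m n (v : {set 'I_m} -> R)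
    (s : {perm 'I_n}) (A : allocation m n) :
  EFXb (fun _ => v) A -> EFXb (fun _ => v) (relabel s A).
Proof.
move=> /'forall_'forall_'forall_implyP EFX_A.
by apply/'forall_'forall_'forall_implyP => i j g; rewrite !bundle_relabel; apply: EFX_A.
Qed.

Lemma relabel_inj m n (A : allocation m n) :
  (forall i, exists g, A g = i) -> injective (fun s => relabel s A).
Proof.
move=> A_onto s t /ffunP eq_st; apply/permP => k; have [g <-] := A_onto k.
by have := eq_st g; rewrite !ffunE.
Qed.

Lemma num_EFX_identical_ge (R : realFieldType) m n (v : {set 'I_m} -> R) :
  (0 < n)%N -> (n <= m)%N -> monotone_valuation v ->
  (n`! <= num_EFX (fun _ : 'I_n => v))%N.
Proof.
move=> n_gt0 le_nm v_mono; have [A sA] := exists_strong_EFX v_mono n_gt0.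
have A_onto := strong_EFX_onto v_mono le_nm sA.
rewrite /num_EFX -card_Sn -cardsT -(card_imset _ (relabel_inj A_onto)).
apply/subset_leq_card/subsetP => _ /imsetP[s _ ->].
by rewrite inE; apply/EFX_relabel/strong_EFX_EFX.
Qed.

Definition first_goods (m k : nat) : {set 'I_m} := [set g : 'I_m | (g < k)%N].

Definition count_first (R : realFieldType) (m k : nat) (S : {set 'I_m}) : R :=
  (#|S :&: first_goods m k|)%:R.

Lemma count_first_additive (R : realFieldType) m k :
  additive_valuation (@count_first R m k).
Proof.
exists (fun g : 'I_m => ((g < k)%N : nat)%:R); split=> [g|S]; first exact: ler0n.
rewrite /count_first -natr_sum -sum1_card; congr _%:R.
rewrite big_mkcond [RHS]big_mkcond /=; apply: eq_bigr => g _.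
by rewrite !inE; case: (g \in S); case: ltnP.
Qed.

Lemma count_first_monotone (R : realFieldType) m k :
  monotone_valuation (@count_first R m k).
Proof.
split=> [|S T sST]; first by rewrite /count_first set0I cards0.
by rewrite ler_nat subset_leq_card // setSI.
Qed.

Lemma ltn_minn_pred n k : (0 < n)%N -> (minn k n.-1 < n)%N.
Proof. lia. Qed.

Definition clamp_allocation m n (n_gt0 : (0 < n)%N) : allocation m n :=
  [ffun g : 'I_m => Ordinal (ltn_minn_pred g n_gt0)].

Section CountFirstEFX.

Variables (R : realFieldType) (m n : nat).
Hypotheses (n_gt0 : (0 < n)%N) (le_nm : (n <= m)%N).

Local Notation small := (first_goods m n.-1).

Variable A : allocation m n.
Hypothesis EFX_A : EFXb (fun _ => @count_first R m n.-1) A.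

Lemma count_first_EFX_free_agent : exists k, bundle A k :&: small = set0.
Proof.
have card_small : (#|small| <= n.-1)%N.
  pose w := widen_ord (leq_trans (leq_pred n) le_nm).
  have -> : small = [set w t | t : 'I_n.-1].
    apply/setP => g; rewrite inE.
    apply/idP/imsetP => [lt_g|[t _ ->]]; last exact: (ltn_ord t).
    by exists (Ordinal lt_g) => //; apply: val_inj.
  by apply: (leq_trans (leq_imset_card _ _)); rewrite card_ord.
have : ~~ ([set: 'I_n] \subset A @: small).
  apply/negP => /subset_leq_card; rewrite cardsT card_ord => le_n.
  have := leq_trans le_n (leq_trans (leq_imset_card A small) card_small).
  by rewrite leqNgt ltn_predL n_gt0.
case/subsetPn => k _ notk; exists k; apply/setP => g; rewrite !inE.
apply/negP => /andP[/eqP Agk small_g].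
by case/negP: notk; rewrite -Agk; apply: imset_f; rewrite inE.
Qed.

(* Removing g from a bundle that also holds the small good h leaves value >= 1,
   more than the free agent's value 0. *)
Lemma count_first_EFX_small_alone g h : A g = A h -> h \in small -> g = h.
Proof.
move=> eq_gh; rewrite inE => small_h; have [k free_k] := count_first_EFX_free_agent.
apply/eqP/negPn/negP => neq_gh.
have : g \in bundle A (A h) by rewrite inE eq_gh.
move: EFX_A => /'forall_'forall_'forall_implyP /(_ k (A h) g) EFX /EFX.
rewrite /count_first ler_nat free_k cards0 leqn0 cards_eq0.
by move=> /eqP/setP/(_ h); rewrite !inE small_h eqxx eq_sym neq_gh.
Qed.

(* s sends t to the owner of good t; by the previous lemma the goods from n - 1
   on all share the bundle of good n - 1. *)
Lemma count_first_EFX_relabel_clamp :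
  exists s : {perm 'I_n}, A = relabel s (clamp_allocation m n_gt0).
Proof.
pose f (t : 'I_n) := A (widen_ord le_nm t).
have small_w (t : 'I_n) : (t < n.-1)%N -> widen_ord le_nm t \in small by rewrite inE.
have f_inj : injective f.
  move=> t t' eq_tt'; apply: ord_inj.
  case: (ltnP t n.-1) => [/small_w/(count_first_EFX_small_alone (esym eq_tt'))|le_t].
    by move/(congr1 val).
  case: (ltnP t' n.-1) => [/small_w/(count_first_EFX_small_alone eq_tt')|le_t'].
    by move/(congr1 val).
  by have := ltn_ord t; have := ltn_ord t'; lia.
exists (perm f_inj); apply/ffunP => g; rewrite !ffunE permE; unfold f.
have [lt_g|/negbTE le_g] := boolP (g < n.-1)%N.
  by congr (A _); apply: ord_inj => /=; lia.
pose u := ((perm f_inj)^-1)%g (A g).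
have Au : A (widen_ord le_nm u) = A g by rewrite -[A _]/(f u) -permE permKV.
have [/small_w small_u|le_u] := ltnP u n.-1.
  by move: (small_u); rewrite -(count_first_EFX_small_alone (esym Au) small_u) inE le_g.
rewrite -Au; congr (A _); apply: ord_inj => /=; have := ltn_ord u; lia.
Qed.

End CountFirstEFX.

Lemma num_EFX_count_first_le (R : realFieldType) m n :
  (0 < n)%N -> (n <= m)%N ->
  (num_EFX (fun _ : 'I_n => @count_first R m n.-1) <= n`!)%N.
Proof.
move=> n_gt0 le_nm; rewrite -card_Sn -cardsT /num_EFX.
apply: leq_trans _ (leq_imset_card (fun s => relabel s (clamp_allocation m n_gt0)) _).
apply/subset_leq_card/subsetP => A; rewrite inE => EFX_A.
by have [s ->] := count_first_EFX_relabel_clamp n_gt0 le_nm EFX_A; apply: imset_f.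
Qed.

Theorem theorem9 (R : realType) (m n : nat) (hn : (0 < n)%N) (hmn : (n <= m)%N) :
  (forall v : {set 'I_m} -> R, monotone_valuation v ->
     (n`! <= num_EFX (fun _ : 'I_n => v))%N)
  /\
  (exists v : {set 'I_m} -> R, additive_valuation v /\
     num_EFX (fun _ : 'I_n => v) = n`!).
Proof.
split=> [v|]; first exact: num_EFX_identical_ge.
exists (@count_first R m n.-1); split; first exact: count_first_additive.
apply/eqP; rewrite eqn_leq num_EFX_count_first_le //.
exact/num_EFX_identical_ge/count_first_monotone.
Qed.
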